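(* Let $p\ge 1$, let $\Theta_{s,a}\subseteq\mathbb{R}^p$ be a set of vectors, and let $\{P_\beta,\ \beta\in\Theta_{s,a}\}$ be a family of probability distributions on a measurable space $(\mathcal{X},\mathcal{U})$ (extended to the support of the prior below); an observation $Y$ is drawn from $P_\beta$ and $\mathbf{E}_\beta$ denotes expectation with respect to $P_\beta$. For any $s<p$, $q\ge 1$ and any probability measure $\pi$ on $\mathbb{R}^p$ (with $\pi(\beta\in\Theta_{s,a})>0$), there exists $C_q>0$ such that $$\inf_{\hat\beta}\sup_{\beta\in\Theta_{s,a}}\mathbf{E}_\beta\|\hat\beta-\beta\|_q^q\ \ge\ \inf_{\hat T}\mathbb{E}_\pi\mathbf{E}_\beta\sum_{j=1}^p|\hat T_j(Y)-\beta_j|^q\ -\ C_q\,\mathbb{E}_\pi\Big[\big(\mathbf{E}(\|\beta^A\|_q^q\mid Y)+\|\beta\|_q^q\big)\mathbf{1}(\beta\notin\Theta_{s,a})\Big],$$ where $\beta^A:=\beta\,\mathbf{1}(\beta\in\Theta_{s,a})=(\beta_1\mathbf{1}(\beta\in\Theta_{s,a}),\dots,\beta_p\mathbf{1}(\beta\in\Theta_{s,a}))$, $\inf_{\hat\beta}$ is the infimum over all estimators, and $\inf_{\hat T}$ is the infimum over all estimators $\hat T(Y)=(\hat T_1(Y),\dots,\hat T_p(Y))$ with values in $\mathbb{R}^p$.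
   Context: $\mathbb{E}_\pi$ denotes expectation with respect to $\beta\sim\pi$ (and $\mathbb{E}_\pi\mathbf{E}_\beta$ the expectation under the joint law where $\beta\sim\pi$ and, given $\beta$, $Y\sim P_\beta$). $\mathbf{E}(\|\beta^A\|_q^q\mid Y)$ denotes the conditional expectation of $\|\beta^A\|_q^q$ given $Y$ when $\beta$ is distributed according to $\pi$ conditioned on the event $\{\beta\in\Theta_{s,a}\}$ and $Y\sim P_\beta$. $\|x\|_q$ is the $\ell_q$ norm. *)

From HB Require Import structures.
From mathcomp Require Import all_boot all_order all_algebra.
From mathcomp Require Import all_classical all_reals all_analysis.
From mathcomp Require Import measurable_realfun.
Set Implicit Arguments. Unset Strict Implicit. Unset Printing Implicit Defensive.
Import Order.TTheory GRing.Theory Num.Theory.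
Local Open Scope classical_set_scope.
Local Open Scope ring_scope.
Local Open Scope ereal_scope.

(* R^p is modelled as p.-tuple R with the product sigma-algebra. *)

Definition lqq (R : realType) (p : nat) (q : R) (x : p.-tuple R) : \bar R :=
  (\sum_(j < p) (`| tnth x j | `^ q))%R%:E.

Definition vsub (R : realType) (p : nat) (u v : p.-tuple R) : p.-tuple R :=
  [tuple (tnth u j - tnth v j)%R | j < p].

Definition betaA (R : realType) (p : nat) (Theta : set (p.-tuple R))
  (b : p.-tuple R) : p.-tuple R :=
  [tuple (tnth b j * \1_Theta b)%R | j < p].

Definition estimators (R : realType) (p : nat) (dX : measure_display)
  (X : measurableType dX) : set (X -> p.-tuple R) :=
  [set f | measurable_fun [set: X] f].

(* Expectation under the joint law where beta ~ pi conditioned on Theta and,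
   given beta, Y ~ P beta :  E_{pi|Theta} E_beta [ f beta Y ]. *)
Definition condA_expect (R : realType) (p : nat) (dX : measure_display)
  (X : measurableType dX) (Theta : set (p.-tuple R))
  (P : R.-pker (p.-tuple R) ~> X) (pi : probability (p.-tuple R) R)
  (f : p.-tuple R -> X -> \bar R) : \bar R :=
  (\int[pi]_b ((\1_Theta b)%:E * \int[P b]_y f b y)) * ((fine (pi Theta))^-1)%:E.

(* g is a (nonnegative, measurable) version of E(||beta^A||_q^q | Y) under the
   joint law above: for every measurable B,
   E[1_B(Y) g(Y)] = E[1_B(Y) ||beta^A||_q^q]. *)
Definition is_cond_exp_betaA (R : realType) (p : nat) (dX : measure_display)
  (X : measurableType dX) (Theta : set (p.-tuple R))
  (P : R.-pker (p.-tuple R) ~> X) (pi : probability (p.-tuple R) R) (q : R)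
  (g : X -> \bar R) : Prop :=
  measurable_fun [set: X] g /\ (forall y, 0 <= g y) /\
  forall B : set X, measurable B ->
    condA_expect Theta P pi (fun _ y => (\1_B y)%:E * g y)
    = condA_expect Theta P pi (fun b y => (\1_B y)%:E * lqq q (betaA Theta b)).

(* Given an estimator bh, let g be the posterior mean of ||beta^A||_q^q and let T be
   bh set to 0 on the set of observations where ||bh(y)||_q^q > 2 c g(y), c = 2^q.
   Outside Theta, T is controlled by g: ||T - beta|| <= c (||T|| + ||beta||)
   <= 2 c^2 (g + ||beta||).  On Theta, T is no worse than bh: where T = 0 its loss
   is ||beta||, and there the triangle inequality gives 2 g <= ||bh - beta|| + ||beta||;
   since g and ||beta|| have the same integral over Theta x B for every measurable B,
   integrating and cancelling yields E[||beta|| 1_B] <= E[||bh - beta|| 1_B].  The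
   cancellation needs a finite integral, hence a truncation {g <= n} followed by
   monotone convergence.  So the Bayes risk of T is at most the maximal risk of bh
   over Theta plus 2 c^2 E[(g + ||beta||) 1(beta \notin Theta)], for every q > 0. *)

From HB Require Import structures.
From mathcomp Require Import all_boot all_order all_algebra.
From mathcomp Require Import all_classical all_reals all_analysis.
From mathcomp Require Import measurable_realfun lra.
Import Order.TTheory GRing.Theory Num.Theory.
Local Open Scope classical_set_scope.
Local Open Scope ring_scope.
Local Open Scope ereal_scope.

Set Implicit Arguments. Unset Strict Implicit.

Section ereal_arith.
Context (R : realFieldType).
Implicit Types x y z : \bar R.

Lemma leeBlDrW x y z : x <= y + z -> x - z <= y.
Proof.
by move: x y z => [x| |] [y| |] [z| |] //=; rewrite ?lee_fin ?leey ?leNye //; lra.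
Qed.

Lemma lee_of_mul2_leDr x y : x \is a fin_num -> 2%:E * x <= y + x -> x <= y.
Proof.
by move: x y => [x| |] [y| |] //= _; rewrite ?lee_fin ?leey //; lra.
Qed.

End ereal_arith.

Section powR_triangle.
Context (R : realType) (q : R).
Hypothesis q_gt0 : (0 < q)%R.
Local Open Scope ring_scope.

Lemma powR_normB_le (a b : R) :
  `|a - b| `^ q <= 2 `^ q * (`|a| `^ q + `|b| `^ q).
Proof.
wlog ba : a b / `|b| <= `|a|.
  move=> h; have [|/ltW ab] := leP `|b| `|a|; first exact: h.
  by rewrite distrC [X in _ * X]addrC; exact: h.
have ab2 : `|a - b| <= 2 * `|a| by have := ler_normB a b; lra.
rewrite (le_trans (ge0_ler_powR (ltW q_gt0) _ _ ab2)) ?nnegrE ?mulr_ge0 //.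
by rewrite powRM // ler_wpM2l ?powR_ge0 // lerDl powR_ge0.
Qed.

End powR_triangle.

Section lq_norm.
Context (R : realType) (p : nat) (q : R).
Hypothesis q_gt0 : (0 < q)%R.
Implicit Types u v : p.-tuple R.

Lemma lqq_ge0 u : 0 <= lqq q u.
Proof. by rewrite lee_fin; apply: sumr_ge0 => j _; exact: powR_ge0. Qed.

Lemma lqq_vsub_le u v : lqq q (vsub u v) <= (2 `^ q)%:E * (lqq q u + lqq q v).
Proof.
rewrite -EFinD -EFinM lee_fin -big_split mulr_sumr; apply: ler_sum => j _.
by rewrite tnth_mktuple; exact: powR_normB_le.
Qed.

Lemma lqq_le_vsub u v : lqq q u <= (2 `^ q)%:E * (lqq q (vsub u v) + lqq q v).
Proof.
rewrite -EFinD -EFinM lee_fin -big_split mulr_sumr; apply: ler_sum => j _.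
have := powR_normB_le q_gt0 (tnth u j - tnth v j) (- tnth v j).
by rewrite tnth_mktuple opprK subrK normrN.
Qed.

Lemma lqq0 : lqq q [tuple 0%R | _ < p] = 0.
Proof.
rewrite /lqq big1 // => j _.
by rewrite tnth_mktuple normr0 powR0 // gt_eqF.
Qed.

Lemma lqq_vsub0l v : lqq q (vsub [tuple 0%R | _ < p] v) = lqq q v.
Proof. by congr EFin; apply: eq_bigr => j _; rewrite !tnth_mktuple sub0r normrN. Qed.

Lemma measurable_lqq : measurable_fun setT (lqq q : p.-tuple R -> \bar R).
Proof.
apply/measurable_EFinP; apply: measurable_sum => j.
apply: measurableT_comp (measurable_powR q) _.
exact: measurableT_comp (@normr_measurable R setT) (measurable_tnth j).
Qed.

Lemma measurable_vsub d (T : measurableType d) (f h : T -> p.-tuple R) :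
  measurable_fun setT f -> measurable_fun setT h ->
  measurable_fun setT (fun x => vsub (f x) (h x)).
Proof.
move=> mf mh; apply/measurable_fun_tnthP => j.
rewrite (_ : _ \o _ = fun x => tnth (f x) j - tnth (h x) j)%R; last first.
  by apply/funext => x /=; rewrite tnth_mktuple.
by apply: measurable_funB; exact: measurableT_comp (measurable_tnth j) _.
Qed.

End lq_norm.

Lemma measurable_fun_indicM d (T : measurableType d) (R : realType)
    (A : set T) (f : T -> \bar R) :
  measurable A -> measurable_fun setT f ->
  measurable_fun setT (fun x => (\1_A x)%:E * f x).
Proof.
move=> mA mf; apply: emeasurable_funM mf.
by apply/measurable_EFinP; exact: measurable_indic.
Qed.

Lemma indic_mule_ge0 (T : Type) (R : realDomainType) (A : set T)
    (h : T -> \bar R) :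
  (forall x, 0 <= h x) -> forall x, 0 <= (\1_A x)%:E * h x.
Proof. by move=> h0 x; rewrite mule_ge0 ?lee_fin. Qed.

Lemma le_indic_mule (T : Type) (R : realDomainType) (A B : set T) x (r : \bar R) :
  A `<=` B -> 0 <= r -> (\1_A x)%:E * r <= (\1_B x)%:E * r.
Proof.
move=> AB r0; apply: lee_wpmul2r => //; rewrite lee_fin !indicE.
by have [/set_mem/AB/mem_set ->|] := boolP (x \in A).
Qed.

Section joint_integral.
Context d d' (T : measurableType d) (X : measurableType d') (R : realType).
Variables (P : R.-fker T ~> X) (mu : {measure set T -> \bar R}).
Implicit Types f : T * X -> \bar R.

Definition joint_integral f := \int[mu]_b \int[P b]_y f (b, y).

Local Notation JI := joint_integral.

Lemma joint_integral_ge0 f : (forall z, 0 <= f z) -> 0 <= JI f.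
Proof. by move=> f0; apply: integral_ge0 => b _; exact: integral_ge0. Qed.

Lemma le_joint_integral f1 f2 :
  (forall z, 0 <= f1 z) -> measurable_fun setT f1 -> measurable_fun setT f2 ->
  (forall z, f1 z <= f2 z) -> JI f1 <= JI f2.
Proof.
move=> f10 mf1 mf2 f12; have f20 z : 0 <= f2 z by exact: le_trans (f12 z).
apply: ge0_le_integral => //; [by move=> b _; exact: integral_ge0|..].
- exact: measurable_fun_integral_finite_kernel.
- exact: measurable_fun_integral_finite_kernel.
- move=> b _; apply: ge0_le_integral => //; exact: measurable_fun_pair2.
Qed.

Lemma joint_integralD f1 f2 :
  (forall z, 0 <= f1 z) -> measurable_fun setT f1 ->
  (forall z, 0 <= f2 z) -> measurable_fun setT f2 ->
  JI (fun z => f1 z + f2 z) = JI f1 + JI f2.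
Proof.
move=> f10 mf1 f20 mf2; rewrite /JI -ge0_integralD //; last 4 first.
- by move=> b _; exact: integral_ge0.
- exact: measurable_fun_integral_finite_kernel.
- by move=> b _; exact: integral_ge0.
- exact: measurable_fun_integral_finite_kernel.
apply: eq_integral => b _; apply: ge0_integralD => //; exact: measurable_fun_pair2.
Qed.

Lemma joint_integralZl (k : R) f : (0 <= k)%R ->
  (forall z, 0 <= f z) -> measurable_fun setT f ->
  JI (fun z => k%:E * f z) = k%:E * JI f.
Proof.
move=> k0 f0 mf; rewrite /JI -ge0_integralZl_EFin //; last 2 first.
- by move=> b _; exact: integral_ge0.
- exact: measurable_fun_integral_finite_kernel.
apply: eq_integral => b _; apply: ge0_integralZl_EFin => //; exact: measurable_fun_pair2.
Qed.

Lemma joint_monotone_convergence (f : (T * X -> \bar R)^nat) :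
  (forall n z, 0 <= f n z) -> (forall n, measurable_fun setT (f n)) ->
  (forall z, nondecreasing_seq (f ^~ z)) ->
  JI (fun z => limn (f ^~ z)) = limn (fun n => JI (f n)).
Proof.
move=> f0 mf ndf; rewrite /JI.
have inner_cvg b : \int[P b]_y limn (f ^~ (b, y)) =
    limn (fun n => \int[P b]_y f n (b, y)).
  by apply: monotone_convergence => // n; exact: measurable_fun_pair2.
under eq_integral do rewrite inner_cvg.
apply: monotone_convergence => //.
- by move=> n; exact: measurable_fun_integral_finite_kernel.
- by move=> n b _; exact: integral_ge0.
- move=> b _ m n mn; apply: ge0_le_integral => //; [exact: measurable_fun_pair2..|].
  by move=> y _; exact: ndf.
Qed.

End joint_integral.

Section joint_integral_probability.
Context d d' (T : measurableType d) (X : measurableType d') (R : realType).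
Variable mu : probability T R.

Lemma joint_integral_cst (P : R.-pker T ~> X) (r : R) :
  joint_integral P mu (fun _ => r%:E) = r%:E.
Proof.
rewrite /joint_integral.
under eq_integral do rewrite integral_cst // prob_kernel mule1.
by rewrite integral_cst // [X in _ * X]probability_setT mule1.
Qed.

Lemma joint_integral_le_sup (P : R.-fker T ~> X) (A : set T) f :
  measurable A -> A !=set0 -> (forall z, 0 <= f z) -> measurable_fun setT f ->
  joint_integral P mu (fun z => (\1_(A `*` setT) z)%:E * f z) <=
  ereal_sup [set \int[P b]_y f (b, y) | b in A].
Proof.
move=> mA [a Aa] f0 mf; set M := ereal_sup _.
have le_M b : A b -> \int[P b]_y f (b, y) <= M.
  by move=> Ab; apply: ereal_sup_ubound; exists b.
apply: (@le_trans _ _ (\int[mu]_b M)); last first.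
  by rewrite integral_cst // [X in _ * X]probability_setT mule1.
apply: ge0_le_integral => //.
- by move=> b _; apply: integral_ge0 => y _; rewrite mule_ge0 ?lee_fin.
- apply: (measurable_fun_integral_finite_kernel
            (fun z => (\1_(A `*` setT) z)%:E * f z) P).
    by move=> z; rewrite mule_ge0 ?lee_fin.
  by apply: measurable_fun_indicM => //; exact: measurableX.
- move=> b _; have [Ab|nAb] := boolP (b \in A).
    rewrite (eq_integral (fun y => f (b, y))); first exact/le_M/set_mem.
    by move=> y _; rewrite indicE in_setX Ab in_setT mul1e.
  rewrite integral0_eq => [|y _]; last by rewrite indicE in_setX (negbTE nAb) mul0e.
  by apply: le_trans (le_M a Aa); exact: integral_ge0.
Qed.

End joint_integral_probability.

Section thresholded_estimator.
Context (R : realType) (p : nat) (dX : measure_display) (X : measurableType dX).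
Variables (Theta : set (p.-tuple R)) (P : R.-pker (p.-tuple R) ~> X).
Variables (pi : probability (p.-tuple R) R) (q : R) (g : X -> \bar R).
Hypotheses (mTheta : measurable Theta) (pi_Theta_gt0 : 0 < pi Theta).
Hypothesis q_gt0 : (0 < q)%R.
Hypothesis g_cond_exp : is_cond_exp_betaA Theta P pi q g.

Local Notation JI := (joint_integral P pi).

Let measurable_g : measurable_fun setT g := g_cond_exp.1.
Let g_ge0 : forall y, 0 <= g y := g_cond_exp.2.1.

Lemma betaA_id b : b \in Theta -> betaA Theta b = b.
Proof. by move=> Tb; apply: eq_from_tnth => j; rewrite tnth_mktuple indicE Tb mulr1. Qed.

Lemma condA_expect_indicE (A : set X) (f : p.-tuple R -> X -> \bar R) :
  condA_expect Theta P pi (fun b y => (\1_A y)%:E * f b y) =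
  JI (fun z => (\1_(Theta `*` A) z)%:E * f z.1 z.2) * ((fine (pi Theta))^-1)%:E.
Proof.
congr (_ * _); apply: eq_integral => b _ /=; rewrite indicE.
have [Tb|nTb] := boolP (b \in Theta).
  by rewrite mul1e; apply: eq_integral => y _; rewrite !indicE in_setX Tb.
rewrite mul0e; apply/esym/integral0_eq => y _.
by rewrite indicE in_setX (negbTE nTb) mul0e.
Qed.

Lemma cond_exp_indic (A : set X) : measurable A ->
  JI (fun z => (\1_(Theta `*` A) z)%:E * g z.2) =
  JI (fun z => (\1_(Theta `*` A) z)%:E * lqq q z.1).
Proof.
move=> mA; have := g_cond_exp.2.2 A mA; rewrite !condA_expect_indicE.
have piT_gt0 : (0 < fine (pi Theta))%R.
  by rewrite fine_gt0 // pi_Theta_gt0 (le_lt_trans (probability_le1 pi mTheta)) ?ltey.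
move/(congr1 (fun t => t * (fine (pi Theta))%:E)).
rewrite -!muleA -EFinM mulVf; last exact: lt0r_neq0.
rewrite !mule1 => ->.
congr joint_integral; apply/funext => -[b y] /=; rewrite indicE in_setX.
by have [Tb|] := boolP (b \in Theta); rewrite ?mul0e //= betaA_id.
Qed.

Definition loss (f : X -> p.-tuple R) (z : p.-tuple R * X) := lqq q (vsub (f z.2) z.1).

Lemma loss_ge0 f z : 0 <= loss f z.
Proof. exact: lqq_ge0. Qed.

Lemma measurable_loss f : measurable_fun setT f -> measurable_fun setT (loss f).
Proof.
move=> mf; apply: measurableT_comp (measurable_lqq q) _.
exact: measurable_vsub (measurableT_comp mf measurable_snd) measurable_fst.
Qed.

Variable bh : X -> p.-tuple R.
Hypothesis mbh : measurable_fun setT bh.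

Local Notation c := (2 `^ q)%R.

Definition overshoot := [set y | (2 * c)%:E * g y < lqq q (bh y)].

Definition thresholded (y : X) : p.-tuple R :=
  [tuple (tnth (bh y) j * \1_(~` overshoot) y)%R | j < p].

Lemma measurable_overshoot : measurable overshoot.
Proof.
have := measurable_lte measurableT (measurable_funeM (2 * c)%:E measurable_g)
  (measurableT_comp (measurable_lqq q) mbh).
by rewrite setTI.
Qed.

Lemma measurable_thresholded : measurable_fun setT thresholded.
Proof.
apply/measurable_fun_tnthP => j.
rewrite (_ : _ \o _ = fun y => tnth (bh y) j * \1_(~` overshoot) y)%R; last first.
  by apply/funext => y /=; rewrite tnth_mktuple.
apply: measurable_funM; first exact: measurableT_comp (measurable_tnth j) mbh.
exact/measurable_indic/measurableC/measurable_overshoot.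
Qed.

Lemma thresholded_overshoot y : y \in overshoot -> thresholded y = [tuple 0%R | _ < p].
Proof.
by move=> By; apply: eq_from_tnth => j; rewrite !tnth_mktuple indicE in_setC By mulr0.
Qed.

Lemma thresholded_id y : y \notin overshoot -> thresholded y = bh y.
Proof.
by move=> By; apply: eq_from_tnth => j; rewrite tnth_mktuple indicE in_setC By mulr1.
Qed.

Lemma lqq_thresholded_le y : lqq q (thresholded y) <= (2 * c)%:E * g y.
Proof.
have [By|By] := boolP (y \in overshoot).
  rewrite thresholded_overshoot // (lqq0 _ q_gt0).
  by rewrite mule_ge0 // lee_fin mulr_ge0 ?powR_ge0.
by rewrite thresholded_id // leNgt; apply: contra By => /mem_set.
Qed.

Lemma overshoot_fin_num y : overshoot y -> g y \is a fin_num.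
Proof.
rewrite /overshoot /=; move: (g_ge0 y); case: (g y) => [r| |] //= _.
by rewrite gt0_muley ?lte_fin ?mulr_gt0 ?powR_gt0 // ltNge leey.
Qed.

Lemma overshoot_le b y : overshoot y ->
  2%:E * g y <= lqq q (vsub (bh y) b) + lqq q b.
Proof.
move=> By; have := lqq_le_vsub q_gt0 (bh y) b.
move: By (overshoot_fin_num By); rewrite /overshoot /= /lqq.
case: (g y) => [r| |] // + _; rewrite -!EFinD -!EFinM !lte_fin !lee_fin => lt_r le_r.
by move: (lt_le_trans lt_r le_r); rewrite -mulrA mulrCA ltr_pM2l ?powR_gt0 // => /ltW.
Qed.

Definition overshoot_trunc (n : nat) := overshoot `&` [set y | g y <= n%:R%:E].

Lemma measurable_overshoot_trunc n : measurable (overshoot_trunc n).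
Proof.
apply: measurableI; first exact: measurable_overshoot.
by rewrite -[X in measurable X]setTI; exact: measurable_lee.
Qed.

Lemma overshoot_trunc_sub n : overshoot_trunc n `<=` overshoot.
Proof. by move=> y []. Qed.

Lemma overshoot_trunc_nd m n : (m <= n)%N -> overshoot_trunc m `<=` overshoot_trunc n.
Proof.
move=> mn y [By gy]; split => //; apply: le_trans gy _.
by rewrite lee_fin ler_nat.
Qed.

Let measurable_g_snd : measurable_fun setT (fun z : p.-tuple R * X => g z.2) :=
  measurableT_comp measurable_g measurable_snd.
Let measurable_lqq_fst : measurable_fun setT (fun z : p.-tuple R * X => lqq q z.1) :=
  measurableT_comp (measurable_lqq q) measurable_fst.

Let g_snd_ge0 (z : p.-tuple R * X) : 0 <= g z.2 := g_ge0 z.2.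

Lemma overshoot_trunc_risk n :
  JI (fun z => (\1_(Theta `*` overshoot_trunc n) z)%:E * g z.2) <=
  JI (fun z => (\1_(Theta `*` overshoot_trunc n) z)%:E * loss bh z).
Proof.
set S := Theta `*` _; have mS : measurable S.
  exact: measurableX mTheta (measurable_overshoot_trunc n).
have mSg := measurable_fun_indicM mS measurable_g_snd.
have mSl := measurable_fun_indicM mS measurable_lqq_fst.
have mSloss := measurable_fun_indicM mS (measurable_loss mbh).
have Sg0 := indic_mule_ge0 S g_snd_ge0.
(* the truncation at [n] makes [I] finite, so that it cancels from [2 I <= risk + I] *)
set I := JI _; have I_fin : I \is a fin_num.
  rewrite ge0_fin_numE ?joint_integral_ge0 //; apply: le_lt_trans (ltry (n%:R)%R).
  rewrite -(joint_integral_cst pi P (n%:R)%R); apply: le_joint_integral => // z.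
  rewrite indicE; have [/set_mem [_ [_ gn]]|_] := boolP (z \in S).
    by rewrite mul1e.
  by rewrite mul0e lee_fin.
apply: lee_of_mul2_leDr => //.
rewrite {2}/I (cond_exp_indic (measurable_overshoot_trunc n)).
rewrite -joint_integralZl // -joint_integralD //; last 2 first.
- exact: indic_mule_ge0 (loss_ge0 bh).
- exact: indic_mule_ge0 (fun z => lqq_ge0 q z.1).
apply: le_joint_integral => //; first by move=> z; rewrite mule_ge0 ?Sg0.
- exact: measurable_funeM.
- exact: emeasurable_funD.
move=> [b y]; rewrite indicE; have [/set_mem [_ [By _]]|_] := boolP ((b, y) \in S).
  by rewrite !mul1e; exact: overshoot_le.
by rewrite !mul0e mule0 adde0.
Qed.

Lemma indic_overshoot_trunc_cvg z :
  (\1_(Theta `*` overshoot) z)%:E * g z.2 =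
  limn (fun n => (\1_(Theta `*` overshoot_trunc n) z)%:E * g z.2).
Proof.
move: z => [b y]; have [By|nBy] := boolP (y \in overshoot).
  have gfin := overshoot_fin_num (set_mem By).
  apply/esym/cvg_lim => //; apply: cvg_near_cst.
  exists (Num.truncn (fine (g y))).+1 => // n /= lt_n.
  have yn : y \in overshoot_trunc n.
    apply/mem_set; split; first exact: set_mem By.
    rewrite /= -(fineK gfin) lee_fin (le_trans (ltW (truncnS_gt _))) //.
    by rewrite ler_nat.
  by rewrite !indicE !in_setX yn By.
have yn n : (y \in overshoot_trunc n) = false.
  by apply/negbTE; apply: contra nBy => /set_mem/overshoot_trunc_sub/mem_set.
under eq_fun do rewrite indicE in_setX yn andbF mul0e.
by rewrite lim_cst // indicE in_setX (negbTE nBy) andbF mul0e.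
Qed.

Lemma overshoot_risk :
  JI (fun z => (\1_(Theta `*` overshoot) z)%:E * lqq q z.1) <=
  JI (fun z => (\1_(Theta `*` overshoot) z)%:E * loss bh z).
Proof.
rewrite -(cond_exp_indic measurable_overshoot).
have mS n := measurableX mTheta (measurable_overshoot_trunc n).
have nd_trunc z :
    nondecreasing_seq (fun n => (\1_(Theta `*` overshoot_trunc n) z)%:E * g z.2).
  move=> m n mn; apply: le_indic_mule => //.
  exact: setSX (overshoot_trunc_nd mn) (@subset_refl _ Theta).
rewrite (eq_fun indic_overshoot_trunc_cvg) joint_monotone_convergence //; last 2 first.
- by move=> n; exact: indic_mule_ge0.
- by move=> n; exact: measurable_fun_indicM.
apply: lime_le.
  apply: ereal_nondecreasing_is_cvgn => m n mn.
  apply: le_joint_integral; [exact: indic_mule_ge0|exact: measurable_fun_indicM..|].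
  by move=> z; exact: nd_trunc.
apply: nearW => n; apply: le_trans (overshoot_trunc_risk n) _.
apply: le_joint_integral.
- exact: indic_mule_ge0 (loss_ge0 bh).
- exact: measurable_fun_indicM (mS n) (measurable_loss mbh).
- apply: measurable_fun_indicM (measurable_loss mbh).
  exact: measurableX mTheta measurable_overshoot.
- move=> z; apply: le_indic_mule (loss_ge0 bh z).
  exact: setSX (@overshoot_trunc_sub n) (@subset_refl _ Theta).
Qed.

Lemma thresholded_risk_Theta :
  JI (fun z => (\1_(Theta `*` setT) z)%:E * loss thresholded z) <=
  JI (fun z => (\1_(Theta `*` setT) z)%:E * loss bh z).
Proof.
pose B := Theta `*` overshoot; pose NB := Theta `*` ~` overshoot.
have mB : measurable B := measurableX mTheta measurable_overshoot.
have mNB : measurable NB := measurableX mTheta (measurableC measurable_overshoot).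
have mloss := measurable_loss mbh.
rewrite (_ : (fun z => _ * loss thresholded z) =
    (fun z => (\1_B z)%:E * lqq q z.1 + (\1_NB z)%:E * loss bh z)); last first.
  apply/funext => -[b y]; rewrite !indicE !in_setX in_setC in_setT andbT.
  have [By|nBy] := boolP (y \in overshoot); rewrite /= ?andbT ?andbF mul0e ?adde0 ?add0e.
    by rewrite /loss /= thresholded_overshoot // lqq_vsub0l.
  by rewrite /loss /= thresholded_id.
rewrite (_ : (fun z => _ * loss bh z) =
    (fun z => (\1_B z)%:E * loss bh z + (\1_NB z)%:E * loss bh z)); last first.
  apply/funext => -[b y]; rewrite !indicE !in_setX in_setC in_setT andbT.
  by have [|] := boolP (y \in overshoot); rewrite ?andbT ?andbF mul0e ?adde0 ?add0e.
rewrite joint_integralD; last 4 first.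
- exact: indic_mule_ge0 (fun z => lqq_ge0 q z.1).
- exact: measurable_fun_indicM measurable_lqq_fst.
- exact: indic_mule_ge0 (loss_ge0 bh).
- exact: measurable_fun_indicM mloss.
rewrite [leRHS]joint_integralD; last 4 first.
- exact: indic_mule_ge0 (loss_ge0 bh).
- exact: measurable_fun_indicM mloss.
- exact: indic_mule_ge0 (loss_ge0 bh).
- exact: measurable_fun_indicM mloss.
by apply: leeD2r; exact: overshoot_risk.
Qed.

Lemma loss_thresholded_le z :
  loss thresholded z <= (2 * c ^+ 2)%:E * (g z.2 + lqq q z.1).
Proof.
move: z => [b y]; rewrite /loss /=.
have c_ge1 : (1 <= c)%R.
  by rewrite -[X in (X <= _)%R](powRr0 2); apply: ler_powR; [exact: ler1n | exact: ltW].
apply: le_trans (lqq_vsub_le q_gt0 (thresholded y) b) _.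
move: (lqq_thresholded_le y) (g_ge0 y) (lqq_ge0 q b); rewrite /lqq.
move: (\sum_(j < p) _)%R (\sum_(j < p) _)%R => l t.
case: (g y) => [r| |] //; last first.
  by move=> *; rewrite addye // gt0_muley ?leey // lte_fin mulr_gt0 ?exprn_gt0 ?powR_gt0.
rewrite -!EFinD -!EFinM !lee_fin => t_le r_ge0 l_ge0.
have ct_le : (c * t <= c * (2 * c * r))%R by rewrite ler_wpM2l ?powR_ge0.
have cl_le : (c * l <= 2 * c ^+ 2 * l)%R by rewrite ler_wpM2r // expr2; nra.
lra.
Qed.

Lemma Theta_neq0 : Theta !=set0.
Proof.
apply/set0P; apply: contraTneq pi_Theta_gt0 => ->.
by rewrite measure0 ltxx.
Qed.

Lemma thresholded_risk :
  JI (loss thresholded) <=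
  ereal_sup [set \int[P b]_y lqq q (vsub (bh y) b) | b in Theta] +
  (2 * c ^+ 2)%:E * JI (fun z => (g z.2 + lqq q z.1) * (\1_(~` Theta) z.1)%:E).
Proof.
have mloss := measurable_loss measurable_thresholded.
have mNT := measurableX (measurableC mTheta) (@measurableT _ X).
rewrite (_ : loss thresholded = fun z =>
    (\1_(Theta `*` setT) z)%:E * loss thresholded z +
    (\1_(~` Theta `*` setT) z)%:E * loss thresholded z); last first.
  apply/funext => -[b y]; rewrite !indicE !in_setX in_setC in_setT !andbT.
  by case: (b \in Theta); rewrite mul0e mul1e ?adde0 ?add0e.
rewrite joint_integralD; last 4 first.
- exact: indic_mule_ge0 (loss_ge0 _).
- exact: measurable_fun_indicM (measurableX mTheta measurableT) mloss.
- exact: indic_mule_ge0 (loss_ge0 _).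
- exact: measurable_fun_indicM mNT mloss.
apply: leeD.
  apply: le_trans thresholded_risk_Theta _; apply: joint_integral_le_sup => //.
  - exact: Theta_neq0.
  - exact: loss_ge0.
  - exact: measurable_loss.
have gl0 z : 0 <= (g z.2 + lqq q z.1) * (\1_(~` Theta) z.1)%:E.
  by rewrite mule_ge0 ?adde_ge0 ?lqq_ge0 ?lee_fin.
have mgl : measurable_fun setT (fun z => (g z.2 + lqq q z.1) * (\1_(~` Theta) z.1)%:E).
  apply: emeasurable_funM; first exact: emeasurable_funD.
  apply/measurable_EFinP; apply: measurableT_comp measurable_fst.
  exact/measurable_indic/measurableC.
rewrite -joint_integralZl ?mulr_ge0 ?sqr_ge0 //; apply: le_joint_integral.
- exact: indic_mule_ge0 (loss_ge0 _).
- exact: measurable_fun_indicM mNT mloss.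
- exact: measurable_funeM.
- move=> [b y]; rewrite !indicE in_setX in_setT andbT in_setC /=.
  case: (b \in Theta) => /=; rewrite ?mul0e ?mule0 // mul1e mule1.
  exact: loss_thresholded_le (b, y).
Qed.

End thresholded_estimator.

Unset Implicit Arguments.

Theorem theorem1 (R : realType) (p : nat) (hp : (1 <= p)%N)
  (s : nat) (hs : (s < p)%N) (Theta : set (p.-tuple R)) (mTheta : measurable Theta)
  (dX : measure_display) (X : measurableType dX)
  (P : R.-pker (p.-tuple R) ~> X)
  (q : R) (hq : (1 <= q)%R)
  (pi : probability (p.-tuple R) R) (hpi : 0%:E < pi Theta) :
  exists C : R, (0 < C)%R /\
  forall g : X -> \bar R, is_cond_exp_betaA Theta P pi q g ->
    ereal_inf [set ereal_sup [set \int[P b]_y lqq q (vsub (bh y) b) | b in Theta]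
              | bh in @estimators R p dX X]
    >=
    ereal_inf [set \int[pi]_b \int[P b]_y
                    (\sum_(j < p) (`| tnth (T y) j - tnth b j | `^ q)%:E)
              | T in @estimators R p dX X]
    - C%:E * \int[pi]_b \int[P b]_y ((g y + lqq q b) * (\1_(~` Theta) b)%:E).
Proof.
have q_gt0 : (0 < q)%R by exact: lt_le_trans ltr01 hq.
exists (2 * (2 `^ q) ^+ 2)%R; split; first by rewrite mulr_gt0 ?exprn_gt0 ?powR_gt0.
move=> g g_cond_exp; apply: le_ereal_inf_tmp => _ [bh mbh <-]; apply: leeBlDrW.
apply: le_trans (thresholded_risk mTheta hpi q_gt0 g_cond_exp mbh).
apply: ereal_inf_lbound; exists (thresholded q g bh).
  exact: (measurable_thresholded g_cond_exp mbh).
apply: eq_integral => b _; apply: eq_integral => y _.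
rewrite /loss /lqq /= sumEFin; congr EFin.
by apply: eq_bigr => j _; rewrite [in RHS]tnth_mktuple.
Qed.
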